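(* Let $n$ be a positive integer and let $x$ be a complex number such that no denominator below vanishes. Then \[ \sum_{k=0}^{n}(-1)^k\binom{n}{k}\frac{\binom{2x+k}{k}}{\binom{2x+n+k}{k}} \frac{1+2x+2k}{1+2x+n+k}H_{k}^2(x) =\frac{1}{2n}\frac{\binom{2x+n}{n}}{\binom{x+n}{n}^2}\big\{H_{n-1}-H_{n}(x)\big\}, \] where $H_k^2(x)$ denotes $(H_k(x))^2$.
   Context: For complex $z$ and a nonnegative integer $k$, $\binom{z}{k}=\frac{z(z-1)\cdots(z-k+1)}{k!}$ (with $\binom{z}{0}=1$). For complex $x$ and nonnegative integer $m$, $H_0(x)=0$ and $H_m(x)=\sum_{j=1}^m\frac{1}{x+j}$; $H_m=H_m(0)=\sum_{j=1}^m\frac1j$. The parameter $x$ is assumed to be such that all denominators are nonzero. *)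

From HB Require Import structures.
From mathcomp Require Import all_boot all_order all_algebra.
From mathcomp Require Import complex.
From mathcomp Require Import reals.
Set Implicit Arguments. Unset Strict Implicit. Unset Printing Implicit Defensive.
Import Order.TTheory GRing.Theory Num.Theory.
Local Open Scope ring_scope.

Definition binom (F : fieldType) (z : F) (k : nat) : F :=
  (\prod_(i < k) (z - i%:R)) / (k`!)%:R.

Definition Hx (F : fieldType) (m : nat) (x : F) : F :=
  \sum_(1 <= j < m.+1) (x + j%:R)^-1.

Definition Hn (F : fieldType) (m : nat) : F := Hx m 0.

From HB Require Import structures.
From mathcomp Require Import all_boot all_order all_algebra.
From mathcomp Require Import complex reals.
From mathcomp Require Import ring zify.
Import Order.TTheory GRing.Theory Num.Theory.
Local Open Scope ring_scope.

(* Deform the k-th summand w_k by the factor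
     prod_{j<k} (x+1+j+y) * prod_{k<=j<n} (x+1+j-y),
   a polynomial in y of degree n whose coefficients of 1, y, y^2 are P,
   P (2 H_k(x) - H_n(x)) and P ((2 H_k(x) - H_n(x))^2 - K) / 2, where
   P = (x+1)(x+2)...(x+n) and K does not depend on k.  A telescoping in k
   shows that the deformed sum L(y) satisfies (n-1-y) L(y+1) + (y+1) L(y) = 0,
   so L vanishes at y = 0, ..., n-1 and is a multiple of
   (-y)(1-y)...(n-1-y); the factor is read off at y = -x-1, where only the
   term k = 0 survives.  Comparing the coefficients of 1, y, y^2 on both sides
   gives in turn sum_k w_k = 0, sum_k w_k H_k(x) and sum_k w_k H_k(x)^2. *)

Definition rising {R : nzSemiRingType} (a : R) (k : nat) : R :=
  \prod_(i < k) (a + i%:R).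

Lemma rising0 (R : nzSemiRingType) (a : R) : rising a 0 = 1.
Proof. by rewrite /rising big_ord0. Qed.

Lemma risingS (R : nzSemiRingType) (a : R) k :
  rising a k.+1 = rising a k * (a + k%:R).
Proof. by rewrite /rising big_ord_recr. Qed.

Lemma risingSl (R : comNzRingType) (a : R) k :
  rising a k.+1 = a * rising (a + 1) k.
Proof.
rewrite /rising big_ord_recl addr0; congr (_ * _); apply: eq_bigr => i _.
by rewrite lift0 -natr1 (addrC _ 1) addrA.
Qed.

Lemma risingP (F : idomainType) (a : F) k :
  reflect (forall i, (i < k)%N -> a + i%:R != 0) (rising a k != 0).
Proof.
apply: (iffP (prodf_neq0 _ _)) => [nz i ik | nz i _]; last exact: nz.
exact: (nz (Ordinal ik)).
Qed.

Lemma rising_neq0_leq {F : idomainType} {a : F} {j k : nat} :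
  (j <= k)%N -> rising a k != 0 -> rising a j != 0.
Proof.
move=> jk /risingP nz; apply/risingP => i ij; exact/nz/(leq_trans ij).
Qed.

Lemma binom_rising (F : fieldType) (z : F) k :
  binom (z + k%:R) k = rising (z + 1) k / k`!%:R.
Proof.
rewrite /binom /rising; congr (_ / _).
rewrite (reindex_inj rev_ord_inj) /=; apply: eq_bigr => i _.
rewrite natrB ?ltn_ord // -addn1 natrD; ring.
Qed.

Lemma size_prod_linear {R : nzRingType} {I : Type} (r : seq I) (a b : I -> R) :
  (size (\prod_(i <- r) ((a i)%:P + b i *: 'X))%R <= (size r).+1)%N.
Proof.
elim: r => [|i r IH]; first by rewrite big_nil size_poly1.
rewrite big_cons (leq_trans (size_polyMleq _ _)) //.
have lin2 : (size ((a i)%:P + b i *: 'X)%R <= 2)%N.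
  rewrite (leq_trans (size_polyD _ _)) // geq_max (leq_trans (size_polyC_leq1 _)) //.
  by rewrite (leq_trans (size_scale_leq _ _)) // size_polyX.
move: lin2 IH; rewrite /=; lia.
Qed.

Lemma coef_prod_linear {F : fieldType} {I : eqType} (r : seq I) (a b : I -> F) :
  {in r, forall i, a i != 0} ->
  let p := \prod_(i <- r) ((a i)%:P + b i *: 'X) in
  let A := \prod_(i <- r) a i in
  let s := \sum_(i <- r) b i / a i in
  [/\ p`_0 = A, p`_1 = A * s
    & p`_2 *+ 2 = A * (s ^+ 2 - \sum_(i <- r) (b i / a i) ^+ 2)].
Proof.
elim: r => [|i r IH] a_neq0 /=.
  by rewrite !big_nil !coefC /= expr0n subrr !mulr0 mul0rn.
have ai0 : a i != 0 by rewrite a_neq0 ?mem_head.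
have /IH[IH0 IH1 IH2] : {in r, forall j, a j != 0}.
  by move=> j rj; apply: a_neq0; rewrite inE rj orbT.
rewrite !big_cons.
set q := \prod_(j <- r) _.
have coef_lin_mul m : (((a i)%:P + b i *: 'X) * q)`_m =
    a i * q`_m + b i * (if m is m'.+1 then q`_m' else 0).
  by rewrite mulrDl coefD coefCM -scalerAl coefZ coefXM; case: m.
rewrite !coef_lin_mul IH0 IH1 mulrnDl -mulrnAr IH2.
by split; [rewrite mulr0 addr0 | field | field].
Qed.

Lemma common_roots_scale {F : fieldType} {p q : {poly F}} {z : F} (rs : seq F) :
  uniq (z :: rs) -> all (root p) rs -> all (root q) rs ->
  (size p <= (size rs).+1)%N -> (size q <= (size rs).+1)%N -> q.[z] != 0 ->
  p = (p.[z] / q.[z]) *: q.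
Proof.
move=> urs rootp rootq sp sq qz0; apply/eqP; rewrite -subr_eq0; apply/eqP.
apply: (@roots_geq_poly_eq0 _ _ (z :: rs)) => //=.
  rewrite rootE !hornerE divfK // subrr eqxx /=.
  apply/allP => y yrs; rewrite rootE !hornerE.
  by rewrite (rootP (allP rootp y yrs)) (rootP (allP rootq y yrs)) mulr0 subrr.
rewrite (leq_trans (size_polyD _ _)) // geq_max size_polyN sp /=.
exact: leq_trans (size_scale_leq _ _) sq.
Qed.

Lemma Hx_shift (F : fieldType) m (x : F) :
  Hx m x = \sum_(0 <= j < m) (x + 1 + j%:R)^-1.
Proof.
by rewrite /Hx big_add1; apply: eq_bigr => j _; rewrite -natr1 addrA addrAC.
Qed.

Definition rising_poly {F : nzRingType} n : {poly F} :=
  \prod_(0 <= m < n) (m%:R%:P - 'X).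

Lemma horner_rising_poly (F : comNzRingType) n (y : F) :
  (rising_poly n).[y] = rising (- y) n.
Proof.
rewrite /rising_poly horner_prod big_mkord; apply: eq_bigr => m _.
by rewrite !hornerE addrC.
Qed.

Lemma size_rising_poly (F : nzRingType) n :
  (size (rising_poly n : {poly F}) <= n.+1)%N.
Proof.
rewrite /rising_poly; under eq_bigr do rewrite -scaleN1r.
by have := size_prod_linear (index_iota 0 n) (fun m => m%:R : F) (fun=> -1);
  rewrite size_iota subn0.
Qed.

Lemma coef_rising_poly (F : numFieldType) n : (0 < n)%N ->
  let q : {poly F} := rising_poly n in
  [/\ q`_0 = 0, q`_1 = - (n.-1)`!%:R & q`_2 = (n.-1)`!%:R * Hn F n.-1].
Proof.
case: n => [//|m] _; rewrite /rising_poly big_ltn //= add0r.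
set p := \prod_(1 <= j < m.+1) _.
have pE : p = \prod_(j <- index_iota 1 m.+1) ((j%:R : F)%:P + (-1) *: 'X).
  by apply: eq_bigr => j _; rewrite scaleN1r.
have nat_neq0 : {in index_iota 1 m.+1, forall j, (j%:R : F) != 0}.
  by move=> j; rewrite mem_index_iota pnatr_eq0 -lt0n => /andP[].
have [p0 p1 _] := coef_prod_linear _ _ (fun=> -1) nat_neq0.
have fact_m : \prod_(j <- index_iota 1 m.+1) (j%:R : F) = m`!%:R.
  by rewrite fact_prod natr_prod.
rewrite -pE fact_m in p0 p1.
rewrite !mulNr !coefN !coefXM /= p0 p1 oppr0 /Hn /Hx -mulrN -sumrN.
split=> //; congr (_ * _); apply: eq_bigr => j _.
by rewrite add0r mulN1r opprK.
Qed.

Section Summation.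

Context {F : numFieldType} (n : nat) (x : F).
Hypothesis n_gt0 : (0 < n)%N.
Hypothesis den_neq0 : rising (2%:R * x + n%:R + 1) n.+1 != 0.

Definition ratio k := (-1) ^+ k * 'C(n, k)%:R
  * (rising (2%:R * x + 1) k / rising (2%:R * x + n%:R + 1) k).

Definition weight k :=
  ratio k * ((2%:R * x + 1 + 2%:R * k%:R) / (2%:R * x + n%:R + 1 + k%:R)).

Lemma den_neq0_at k : (k <= n)%N -> 2%:R * x + n%:R + 1 + k%:R != 0.
Proof. by move: den_neq0 => /risingP; apply. Qed.

Lemma ratioS k : (k < n)%N ->
  ratio k.+1 = - ratio k * (n%:R - k%:R) * (2%:R * x + 1 + k%:R)
                 / (k.+1%:R * (2%:R * x + n%:R + 1 + k%:R)).
Proof.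
move=> kn; have k1_neq0 : k.+1%:R != 0 :> F by rewrite pnatr_eq0.
have binS : 'C(n, k.+1)%:R = 'C(n, k)%:R * (n%:R - k%:R) / k.+1%:R :> F.
  rewrite -natrB 1?ltnW // -natrM mulnC -mul_bin_left natrM mulrC mulKf //.
have r0 := rising_neq0_leq (leqW (ltnW kn)) den_neq0.
have d0 := den_neq0_at _ (ltnW kn).
rewrite /ratio !risingS exprS binS.
by field; rewrite r0 d0 nat1r k1_neq0.
Qed.

Lemma ratio_small k : (n < k)%N -> ratio k = 0.
Proof. by move=> nk; rewrite /ratio bin_small // mulr0 mul0r. Qed.

Definition head_prod y k := rising (x + 1 + y) k.
Definition tail_prod y k := rising (x + 1 - y + k%:R) (n - k).

Lemma head_prodS y k : head_prod y k.+1 = head_prod y k * (x + 1 + y + k%:R).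
Proof. exact: risingS. Qed.

Lemma head_prodSl y k : head_prod y k.+1 = (x + 1 + y) * head_prod (y + 1) k.
Proof. by rewrite /head_prod risingSl (addrA (x + 1)). Qed.

Lemma tail_prod_n y : tail_prod y n = 1.
Proof. by rewrite /tail_prod subnn rising0. Qed.

Lemma tail_prodSl y k : (k < n)%N ->
  tail_prod y k = (x + 1 - y + k%:R) * tail_prod y k.+1.
Proof. by move=> kn; rewrite /tail_prod -(subnSK kn) risingSl -natr1 addrA. Qed.

Lemma tail_prod_shift y k : (k < n)%N ->
  tail_prod y k = tail_prod (y + 1) k.+1 * (x + n%:R - y).
Proof.
move=> kn; rewrite /tail_prod -(subnSK kn) risingS.
have -> : x + 1 - (y + 1) + k.+1%:R = x + 1 - y + k%:R by rewrite -natr1; ring.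
by congr (_ * _); rewrite natrB // -natr1; ring.
Qed.

Definition deformed_term y k := weight k * head_prod y k * tail_prod y k.

(* Zeilberger's certificate for the recurrence [deformed_sum_rec] in y. *)
Definition certificate y k :=
  - (k%:R * (x + k%:R)) * ratio k * head_prod (y + 1) k.-1 * tail_prod (y + 1) k.

Lemma certificate_step y k : (k <= n)%N ->
  certificate y k.+1 - certificate y k
  = (n%:R - 1 - y) * deformed_term (y + 1) k + (y + 1) * deformed_term y k.
Proof.
move=> kn; have d0 := den_neq0_at _ kn.
rewrite /certificate /deformed_term /weight.
move: kn d0; rewrite leq_eqVlt => /predU1P[-> | kn] d0.
  have headS : head_prod (y + 1) n = head_prod (y + 1) n.-1 * (x + y + 1 + n%:R).
    by rewrite -{1}(prednK n_gt0) head_prodS -subn1 natrB //; ring.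
  have headSl : head_prod y n = (x + 1 + y) * head_prod (y + 1) n.-1.
    by rewrite -{1}(prednK n_gt0) head_prodSl.
  by rewrite (ratio_small _ (ltnSn n)) !tail_prod_n headSl headS; field.
rewrite ratioS // (tail_prod_shift y _ kn) (tail_prodSl (y + 1) _ kn).
case: k kn d0 => [|k] kn d0.
  by rewrite /ratio /head_prod !rising0 expr0 bin0; field; rewrite addr0 in d0.
rewrite (head_prodSl y) head_prodS /=.
by field; rewrite nat1r d0 -natrD pnatr_eq0.
Qed.

Definition deformed_sum y := \sum_(0 <= k < n.+1) deformed_term y k.

Lemma deformed_sum_rec y :
  (n%:R - 1 - y) * deformed_sum (y + 1) + (y + 1) * deformed_sum y = 0.
Proof.
rewrite /deformed_sum !mulr_sumr -big_split /=.
rewrite (telescope_sumr_eq (certificate y)) => [|//|k /andP[_ kn]]; last first.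
  by rewrite certificate_step.
by rewrite /certificate ratio_small // !(mulr0, mul0r, oppr0) addr0.
Qed.

Lemma deformed_sum_nat m : (m < n)%N -> deformed_sum m%:R = 0.
Proof.
elim: m => [|m IH] mn.
  have := deformed_sum_rec (-1); rewrite addNr mul0r addr0 opprK subrK.
  by move/eqP; rewrite mulf_eq0 pnatr_eq0 eqn0Ngt n_gt0 => /eqP.
have := deformed_sum_rec m%:R; rewrite IH ?(ltnW mn) // mulr0 addr0 natr1.
have -> : n%:R - 1 - m%:R = (n - m.+1)%:R :> F.
  by rewrite natrB ?(ltnW mn) // -natr1; ring.
by move/eqP; rewrite mulf_eq0 pnatr_eq0 subn_eq0 leqNgt mn => /eqP.
Qed.

Lemma deformed_sum_at : deformed_sum (- x - 1) = rising (2%:R * x + 1) n.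
Proof.
rewrite /deformed_sum big_ltn // big_add1 big1 => [|k _]; last first.
  rewrite /deformed_term /head_prod risingSl.
  by rewrite (_ : x + 1 + (- x - 1) = 0) ?mulr0 ?mul0r //; ring.
rewrite addr0 /deformed_term /weight /head_prod /tail_prod /ratio.
rewrite !rising0 subn0 expr0 bin0.
have -> : x + 1 - (- x - 1) + 0%:R = 2%:R * x + 1 + 1 by ring.
have shift : (2%:R * x + 1) * rising (2%:R * x + 1 + 1) n
             = rising (2%:R * x + 1) n * (2%:R * x + 1 + n%:R).
  by rewrite -risingSl risingS.
have d0 := den_neq0_at _ (leq0n n).
rewrite addr0 in d0.
by rewrite mulr0 !addr0 divr1 !mul1r mulr1 mulrAC shift (addrAC _ 1) mulfK.
Qed.

Definition factor_poly k : {poly F} :=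
  \prod_(0 <= j < n) ((x + 1 + j%:R)%:P + (-1) ^+ (k <= j) *: 'X).

Definition deformed_poly := \sum_(0 <= k < n.+1) weight k *: factor_poly k.

Lemma horner_factor_poly k y : (k <= n)%N ->
  (factor_poly k).[y] = head_prod y k * tail_prod y k.
Proof.
move=> kn; rewrite /factor_poly horner_prod (big_cat_nat (leq0n k) kn) /=.
congr (_ * _).
  rewrite /head_prod /rising big_mkord; apply: eq_bigr => j _.
  by rewrite !hornerE leqNgt ltn_ord mul1r addrAC.
rewrite /tail_prod /rising -{1}(add0n k) big_addn big_mkord; apply: eq_bigr => j _.
by rewrite !hornerE leq_addl mulN1r natrD; ring.
Qed.

Lemma horner_deformed_poly y : deformed_poly.[y] = deformed_sum y.
Proof.
rewrite /deformed_poly horner_sum; apply: eq_big_nat => k /andP[_ kn].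
by rewrite hornerZ horner_factor_poly // /deformed_term mulrA.
Qed.

Lemma size_factor_poly k : (size (factor_poly k) <= n.+1)%N.
Proof.
have := size_prod_linear (index_iota 0 n) (fun j => x + 1 + j%:R)
  (fun j => (-1) ^+ (k <= j)).
by rewrite size_iota subn0.
Qed.

Lemma size_deformed_poly : (size deformed_poly <= n.+1)%N.
Proof.
apply: (big_ind (fun p : {poly F} => size p <= n.+1)%N) => [|p q sp sq|k _].
- by rewrite size_poly0.
- by rewrite (leq_trans (size_polyD _ _)) // geq_max sp sq.
- exact: leq_trans (size_scale_leq _ _) (size_factor_poly k).
Qed.

Hypothesis x_neq0 : rising (x + 1) n != 0.

Lemma deformed_polyE :
  deformed_poly = (rising (2%:R * x + 1) n / rising (x + 1) n) *: rising_poly n.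
Proof.
have at_z : (rising_poly n).[- x - 1] = rising (x + 1) n :> F.
  by rewrite horner_rising_poly opprB opprK addrC.
rewrite -at_z -deformed_sum_at -horner_deformed_poly.
have /risingP x_ok := x_neq0.
apply: (common_roots_scale [seq m%:R | m <- index_iota 0 n]).
- rewrite /= map_inj_uniq ?iota_uniq ?andbT => [|a b /eqP]; last first.
    by rewrite eqr_nat => /eqP.
  apply/mapP => -[m]; rewrite mem_index_iota => /andP[_ mn] /eqP.
  by rewrite -subr_eq0 -!opprD oppr_eq0 (negbTE (x_ok m mn)).
- apply/allP => y /mapP[m]; rewrite mem_index_iota => /andP[_ mn] ->.
  by rewrite rootE horner_deformed_poly deformed_sum_nat.
- apply/allP => y /mapP[m]; rewrite mem_index_iota => /andP[_ mn] ->.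
  rewrite rootE horner_rising_poly; apply: contraT => /risingP/(_ m mn).
  by rewrite addNr eqxx.
- by rewrite size_map size_iota subn0 size_deformed_poly.
- by rewrite size_map size_iota subn0 size_rising_poly.
- by rewrite at_z.
Qed.

Lemma coef_factor_poly k : (k <= n)%N ->
  let E := factor_poly k in
  let h := 2%:R * Hx k x - Hx n x in
  [/\ E`_0 = rising (x + 1) n, E`_1 = rising (x + 1) n * h
    & E`_2 *+ 2 = rising (x + 1) n
                  * (h ^+ 2 - \sum_(0 <= j < n) (x + 1 + j%:R) ^- 2)].
Proof.
move=> kn E h.
have a_neq0 : {in index_iota 0 n, forall j, x + 1 + j%:R != 0}.
  by move=> j; rewrite mem_index_iota => /andP[_]; apply/risingP.
have [-> -> ->] := coef_prod_linear _ _ (fun j => (-1) ^+ (k <= j)) a_neq0.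
have -> : \prod_(j <- index_iota 0 n) (x + 1 + j%:R) = rising (x + 1) n.
  by rewrite /rising big_mkord.
have -> : \sum_(j <- index_iota 0 n) (-1) ^+ (k <= j) / (x + 1 + j%:R) = h.
  rewrite /h !Hx_shift !(big_cat_nat (leq0n k) kn) /=.
  rewrite [X in X + _ = _](eq_big_nat _ _ (F2 := fun j => (x + 1 + j%:R)^-1)).
    rewrite [X in _ + X = _](eq_big_nat _ _ (F2 := fun j => - (x + 1 + j%:R)^-1)).
      by rewrite sumrN; ring.
    by move=> j /andP[-> _]; rewrite mulN1r.
  by move=> j /andP[_ jk]; rewrite leqNgt jk mul1r.
split=> //; congr (_ * (_ - _)); apply: eq_bigr => j _.
by rewrite exprMn sqrr_sign mul1r exprVn.
Qed.

Lemma sum_weight_coef i :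
  \sum_(0 <= k < n.+1) weight k * (factor_poly k)`_i
  = rising (2%:R * x + 1) n / rising (x + 1) n * (rising_poly n)`_i.
Proof.
rewrite -coefZ -deformed_polyE /deformed_poly coef_sum.
by apply: eq_bigr => k _; rewrite coefZ.
Qed.

Lemma sum_weight : \sum_(0 <= k < n.+1) weight k = 0.
Proof.
have [q0 _ _] := coef_rising_poly F _ n_gt0.
have := sum_weight_coef 0; rewrite q0 mulr0.
rewrite (eq_big_nat _ _ (F2 := fun k => weight k * rising (x + 1) n)).
  by rewrite -mulr_suml => /eqP; rewrite mulf_eq0 (negbTE x_neq0) orbF => /eqP.
by move=> k /andP[_ kn]; have [-> _ _] := coef_factor_poly _ kn.
Qed.

Lemma sum_weight_Hx : \sum_(0 <= k < n.+1) weight k * Hx k x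
  = - (n.-1)`!%:R * rising (2%:R * x + 1) n / (rising (x + 1) n ^+ 2 *+ 2).
Proof.
set P := rising (x + 1) n.
have [_ q1 _] := coef_rising_poly F _ n_gt0.
have := sum_weight_coef 1; rewrite q1.
rewrite (eq_big_nat _ _
  (F2 := fun k => P *+ 2 * (weight k * Hx k x) - P * Hx n x * weight k)).
  rewrite sumrB -!mulr_sumr sum_weight mulr0 subr0 => e.
  apply: (mulfI (_ : P *+ 2 != 0)); first by rewrite mulrn_eq0 negb_or x_neq0.
  by rewrite e /P; field.
move=> k /andP[_ kn]; have [_ -> _] := coef_factor_poly _ kn.
by rewrite /= /P; ring.
Qed.

Lemma sum_weight_Hx2 : \sum_(0 <= k < n.+1) weight k * Hx k x ^+ 2
  = (n.-1)`!%:R * rising (2%:R * x + 1) n / (rising (x + 1) n ^+ 2 *+ 2)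
    * (Hn F n.-1 - Hx n x).
Proof.
set P := rising (x + 1) n; set K := \sum_(0 <= j < n) (x + 1 + j%:R) ^- 2.
have [_ _ q2] := coef_rising_poly F _ n_gt0.
have := congr1 (fun t => t *+ 2) (sum_weight_coef 2); rewrite q2 /= -sumrMnl.
rewrite (eq_big_nat _ _ (F2 := fun k => P *+ 4 * (weight k * Hx k x ^+ 2)
  - P *+ 4 * Hx n x * (weight k * Hx k x) + P * (Hx n x ^+ 2 - K) * weight k)).
  rewrite big_split sumrB -!mulr_sumr sum_weight sum_weight_Hx mulr0 /= addr0.
  move/eqP; rewrite subr_eq => /eqP e.
  apply: (mulfI (_ : P *+ 4 != 0)); first by rewrite mulrn_eq0 negb_or x_neq0.
  by rewrite e /P; field.
move=> k /andP[_ kn]; have [_ _ E2] := coef_factor_poly _ kn.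
by rewrite -mulrnAr E2 /= /P /K; ring.
Qed.

End Summation.

Local Open Scope complex_scope.

Theorem theorem7 (R : realType) (n : nat) (x : R[i])
  (hn : (0 < n)%N)
  (hxj : forall j : nat, (1 <= j <= n)%N -> x + j%:R != 0)
  (hbin : forall k : nat, (k <= n)%N -> binom (2%:R * x + n%:R + k%:R) k != 0)
  (hden : forall k : nat, (k <= n)%N -> 1 + 2%:R * x + n%:R + k%:R != 0)
  (hbin2 : binom (x + n%:R) n != 0) :
  \sum_(0 <= k < n.+1)
     (-1) ^+ k * ('C(n, k))%:R
     * (binom (2%:R * x + k%:R) k / binom (2%:R * x + n%:R + k%:R) k)
     * ((1 + 2%:R * x + 2%:R * k%:R) / (1 + 2%:R * x + n%:R + k%:R))
     * (Hx k x) ^+ 2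
  = ((2 * n)%:R)^-1 * (binom (2%:R * x + n%:R) n / (binom (x + n%:R) n) ^+ 2)
     * (Hn _ n.-1 - Hx n x).
Proof.
(* [hbin] and [hbin2] follow from [hden] and [hxj]. *)
have den_neq0 : rising (2%:R * x + n%:R + 1) n.+1 != 0.
  apply/risingP => k kn.
  have -> : 2%:R * x + n%:R + 1 + k%:R = 1 + 2%:R * x + n%:R + k%:R by ring.
  exact: hden.
have x_neq0 : rising (x + 1) n != 0.
  by apply/risingP => j jn; rewrite -addrA nat1r hxj.
have fact_n : n`! = (n * n.-1`!)%N by rewrite -{1}(prednK hn) factS prednK.
rewrite (eq_big_nat _ _ (F2 := fun k => weight n x k * Hx k x ^+ 2)) => [|k _].
  rewrite sum_weight_Hx2 // !binom_rising fact_n natrM.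
  by field; rewrite !pnatr_eq0 -!lt0n fact_gt0 hn x_neq0.
rewrite !binom_rising invf_div mulrA divfK ?pnatr_eq0 -?lt0n ?fact_gt0 //.
have -> : 1 + 2%:R * x + 2%:R * k%:R = 2%:R * x + 1 + 2%:R * k%:R by ring.
by have -> : 1 + 2%:R * x + n%:R + k%:R = 2%:R * x + n%:R + 1 + k%:R by ring.
Qed.
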